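(* Let $h,h'\in\mathbf N$, $w=x_1\cdots x_k\in\{x,y\}^*$, $s$ a right-infinite and $s'$ a left-infinite word over $\{x,y\}$ such that ${}^ts=s'\,x\,y^{h'}\,x\,w$ and ${}^ts'=w\,y\,x^h\,y\,s$, and suppose the frontier $f=s'\,x y^{h'} x\,w\,y x^h y\,s$ is admissible. Embed $f$ and let $t$ be the $SL_2$-tiling with values in $\mathbf N$ extending it. Let $P_0,\dots,P_k$ be the successive path points along the factor $w$ (so $P_0$ precedes $x_1$, $P_j$ lies between $x_j$ and $x_{j+1}$, $P_k$ follows $x_k$), and $b(j,n)=t(P_j+n(1,-1))$. Let $I$ be the path point between $x^h$ and the following $y$ in $yx^hy$, $I'$ the path point between the first $x$ and $y^{h'}$ in $xy^{h'}x$, $J=I+(0,-1)$, $K=I+(0,-2)$, $J'=I'+(1,0)$, $K'=I'+(2,0)$, and put $i_n=t(I+n(1,0))$, $i'_n=t(I'+n(0,-1))$, $j_n=t(J+n(1,-1))$, $k_n=t(K+n(1,-1))$, $j'_n=t(J'+n(1,-1))$, $k'_n=t(K'+n(1,-1))$. Then for all $n\in\mathbf N$: $j_n=(h+1)i_n^2$, $k_n+1=(h+1)i_ni_{n+1}$, $j'_n=(h'+1){i'_n}^2$, $k'_n+1=(h'+1)i'_ni'_{n+1}$; and for $j=1,\dots,k-1$, $b(j,n)b(j,n+1)=1+B$ where $B=b(j-1,n+1)b(j+1,n)$ if $x_jx_{j+1}=xx$; $B=b(j-1,n+1)b(j+1,n+1)$ if $x_jx_{j+1}=xy$; $B=b(j-1,n)b(j+1,n)$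 if $x_jx_{j+1}=yx$; $B=b(j-1,n)b(j+1,n+1)$ if $x_jx_{j+1}=yy$.
   Context: Cartesian coordinates on $\mathbf Z^2$. The transpose ${}^tw$ of a word reverses it and exchanges $x$ and $y$ (transposes of right-infinite words are left-infinite and vice versa). A frontier is a bi-infinite word over $\{x,y\}$, admissible if neither half is ultimately constant; it is embedded as lattice points with each letter $x$ a step $(1,0)$ and each letter $y$ a step $(0,1)$. The extending $SL_2$-tiling is the unique $t:\mathbf Z^2\to\mathbf N$ with $t(a,b+1)t(a+1,b)-t(a,b)t(a+1,b+1)=1$ for all $(a,b)$ and $t=1$ on the path points. *)

From Stdlib Require Import ZArith List.
Import ListNotations.
Open Scope Z_scope.

Inductive letter := X | Y.

Definition swap (l : letter) : letter := match l with X => Y | Y => X end.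

Definition rword := nat -> letter.
(* left-infinite word: index 0 is the LAST letter, index 1 the one before, ... *)
Definition lword := nat -> letter.

(* transpose: reverse and exchange x,y *)
Definition tr_r (s : rword) : lword := fun m => swap (s m).
Definition tr_l (s : lword) : rword := fun m => swap (s m).

(* left-infinite word s followed by finite word u *)
Definition lcat (s : lword) (u : list letter) : lword :=
  fun m => if Nat.ltb m (length u) then nth (length u - 1 - m)%nat u X
           else s (m - length u)%nat.
Definition rcat (u : list letter) (s : rword) : rword :=
  fun m => if Nat.ltb m (length u) then nth m u X else s (m - length u)%nat.

Definition frontier := Z -> letter.

(* L R: positions < 0 are L (position -1 = last letter of L), positions >= 0 are R *)
Definition join (L : lword) (R : rword) : frontier :=
  fun i => if i <? 0 then L (Z.to_nat (- i - 1)) else R (Z.to_nat i).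

Definition ult_const_right (f : frontier) : Prop :=
  exists N, forall i, N <= i -> f i = f N.
Definition ult_const_left (f : frontier) : Prop :=
  exists N, forall i, i <= N -> f i = f N.
Definition admissible (f : frontier) : Prop :=
  ~ ult_const_right f /\ ~ ult_const_left f.

Definition step (l : letter) : Z * Z := match l with X => (1, 0) | Y => (0, 1) end.
Definition padd (P v : Z * Z) : Z * Z := (fst P + fst v, snd P + snd v).
Definition psub (P v : Z * Z) : Z * Z := (fst P - fst v, snd P - snd v).

(* Embedding: path f i is the lattice point just before the letter at position i
   (and just after the letter at position i-1); path f 0 = (0,0). *)
Fixpoint pos_path (f : frontier) (n : nat) : Z * Z :=
  match n with
  | O => (0, 0)
  | S n => padd (pos_path f n) (step (f (Z.of_nat n)))
  end.
Fixpoint neg_path (f : frontier) (n : nat) : Z * Z :=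
  match n with
  | O => (0, 0)
  | S n => psub (neg_path f n) (step (f (- Z.of_nat n - 1)))
  end.
Definition path (f : frontier) (i : Z) : Z * Z :=
  if 0 <=? i then pos_path f (Z.to_nat i) else neg_path f (Z.to_nat (- i)).

Definition SL2_tiling (t : Z * Z -> nat) : Prop :=
  forall a b : Z, Nat.mul (t (a, b + 1)) (t (a + 1, b)) = Nat.add 1 (Nat.mul (t (a, b)) (t (a + 1, b + 1))).

Definition extends (t : Z * Z -> nat) (f : frontier) : Prop :=
  forall i, t (path f i) = 1%nat.

From Stdlib Require Import ZArith List Lia Classical.
Import ListNotations.
Open Scope Z_scope.

(* Give the letters the matrices M(x) = [[1,1],[0,1]] and
   M(y) = [[1,0],[1,1]].  The SL2-tiling extending a frontier is then given by
   a transfer-matrix formula: at the lattice point with the abscissa of a path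
   point q and the ordinate of an earlier path point p, its value is the
   entry a22 of the product of the matrices of the letters between p and q
   (corner_entry, by induction on q - p using the SL2 relation).
   The hypotheses on s and s' make the frontier symmetric, up to exchanging x
   and y, about the factors y x^h y and x y^h' x (frontier_shape).  Across
   such a mirror a segment read backwards is the transpose of the mirrored
   one, so the values of t in the region cut out by the mirror are entries
   a22 (A^T N B), N the matrix of the mirror factor (mirror_value).  As f is
   not ultimately constant to the right, every column beyond the mirror is
   entered by an x-step of the path (column_X_step); the segment up to it
   gives A, and the formulas for i, j, k (resp. i', j', k') become polynomial
   identities for a matrix of determinant 1 (yxy_mirror, xyx_mirror).  The
   relation between the b(j, n) is the SL2 relation of a single unit square
   (antidiagonal_relation). *)

(** Integer 2x2 matrices and the letter matrices. *)

Record mat := Mat { a11 : Z; a12 : Z; a21 : Z; a22 : Z }.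

Definition mmul (A B : mat) : mat :=
  Mat (a11 A * a11 B + a12 A * a21 B) (a11 A * a12 B + a12 A * a22 B)
      (a21 A * a11 B + a22 A * a21 B) (a21 A * a12 B + a22 A * a22 B).
Definition mtr (A : mat) : mat := Mat (a11 A) (a21 A) (a12 A) (a22 A).
Definition mdet (A : mat) : Z := a11 A * a22 A - a12 A * a21 A.
Definition mid : mat := Mat 1 0 0 1.

(* M(x) = [[1,1],[0,1]] and M(y) = [[1,0],[1,1]]; the off-diagonal entries
   are the coordinates of the step of the letter. *)
Definition ML (l : letter) : mat :=
  match l with X => Mat 1 1 0 1 | Y => Mat 1 0 1 1 end.

Definition word_mat (u : list letter) : mat :=
  fold_right (fun l M => mmul (ML l) M) mid u.
Definition word_disp (u : list letter) : Z * Z :=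
  fold_right (fun l v => padd (step l) v) (0, 0) u.

Lemma mmul_assoc A B C : mmul A (mmul B C) = mmul (mmul A B) C.
Proof. destruct A, B, C; unfold mmul; cbn [a11 a12 a21 a22]; f_equal; ring. Qed.

Lemma mmul_id_l A : mmul mid A = A.
Proof. destruct A; unfold mmul, mid; cbn [a11 a12 a21 a22]; f_equal; ring. Qed.

Lemma mmul_id_r A : mmul A mid = A.
Proof. destruct A; unfold mmul, mid; cbn [a11 a12 a21 a22]; f_equal; ring. Qed.

Lemma mtr_mul A B : mtr (mmul A B) = mmul (mtr B) (mtr A).
Proof. destruct A, B; unfold mmul, mtr; cbn [a11 a12 a21 a22]; f_equal; ring. Qed.

Lemma mdet_mul A B : mdet (mmul A B) = mdet A * mdet B.
Proof. destruct A, B; unfold mmul, mdet; cbn [a11 a12 a21 a22]; ring. Qed.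

Lemma ML_swap l : ML (swap l) = mtr (ML l).
Proof. destruct l; reflexivity. Qed.

Lemma word_mat_app u v : word_mat (u ++ v) = mmul (word_mat u) (word_mat v).
Proof.
  induction u as [|l u IH]; simpl.
  - now rewrite mmul_id_l.
  - now rewrite IH, mmul_assoc.
Qed.

Lemma word_disp_app u v : word_disp (u ++ v) = padd (word_disp u) (word_disp v).
Proof.
  induction u as [|l u IH]; simpl.
  - destruct (word_disp v); unfold padd; cbn [fst snd]; f_equal; ring.
  - rewrite IH. destruct (step l), (word_disp u), (word_disp v).
    unfold padd; cbn [fst snd]; f_equal; ring.
Qed.

Lemma word_mat_repeat l n :
  word_mat (repeat l n) =
  Mat 1 (Z.of_nat n * fst (step l)) (Z.of_nat n * snd (step l)) 1.
Proof.
  induction n as [|n IH]; [destruct l; reflexivity|].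
  cbn [repeat word_mat fold_right]. fold (word_mat (repeat l n)). rewrite IH.
  destruct l; unfold mmul; cbn [a11 a12 a21 a22 fst snd step ML]; f_equal; lia.
Qed.

Lemma word_disp_repeat l n :
  word_disp (repeat l n) = (Z.of_nat n * fst (step l), Z.of_nat n * snd (step l)).
Proof.
  induction n as [|n IH]; [destruct l; reflexivity|].
  cbn [repeat word_disp fold_right]. fold (word_disp (repeat l n)). rewrite IH.
  destruct l; unfold padd; cbn [fst snd step]; f_equal; lia.
Qed.

Lemma yxy_factor (h : nat) :
  word_mat (Y :: repeat X h ++ [Y]) =
    Mat (1 + Z.of_nat h) (Z.of_nat h) (Z.of_nat h + 2) (Z.of_nat h + 1) /\
  word_disp (Y :: repeat X h) = (Z.of_nat h, 1) /\
  word_disp (Y :: repeat X h ++ [Y]) = (Z.of_nat h, 2).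
Proof.
  change (Y :: repeat X h ++ [Y]) with ([Y] ++ repeat X h ++ [Y]).
  change (Y :: repeat X h) with ([Y] ++ repeat X h).
  rewrite !word_mat_app, !word_disp_app, word_mat_repeat, word_disp_repeat.
  cbn [word_mat word_disp fold_right].
  unfold mmul, padd, mid; cbn [a11 a12 a21 a22 fst snd step ML]; repeat split; f_equal; lia.
Qed.

Lemma xyx_factor (h : nat) :
  word_mat (X :: repeat Y h ++ [X]) =
    Mat (1 + Z.of_nat h) (Z.of_nat h + 2) (Z.of_nat h) (Z.of_nat h + 1) /\
  word_disp (X :: repeat Y h ++ [X]) = (2, Z.of_nat h).
Proof.
  change (X :: repeat Y h ++ [X]) with ([X] ++ repeat Y h ++ [X]).
  rewrite !word_mat_app, !word_disp_app, word_mat_repeat, word_disp_repeat.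
  cbn [word_mat word_disp fold_right].
  unfold mmul, padd, mid; cbn [a11 a12 a21 a22 fst snd step ML]; split; f_equal; lia.
Qed.

(* The SL2 relation satisfied by the entries a22 of M, M(y) M, M M(x) and
   M(y) M M(x) when det M = 1; it drives the matrix formula for tilings. *)
Lemma a22_recurrence M : mdet M = 1 ->
  a22 M * a22 (mmul (ML Y) (mmul M (ML X))) =
  1 + a22 (mmul (ML Y) M) * a22 (mmul M (ML X)).
Proof. destruct M; unfold mdet, mmul; cbn [a11 a12 a21 a22 ML]; intros; nia. Qed.

(* The polynomial identities behind the four formulas for j, k (resp. j', k'):
   A is the matrix of the segment leaving the mirror factor. *)
Lemma yxy_identities (h : Z) (A : mat) : mdet A = 1 ->
  let N := Mat (1 + h) h (h + 2) (h + 1) in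
  a22 (mmul (mtr A) (mmul N A)) =
    (h + 1) * (a22 (mmul (ML Y) A) * a22 (mmul (ML Y) A)) /\
  a22 (mmul (mtr (mmul A (ML X))) (mmul N A)) + 1 =
    (h + 1) * a22 (mmul (ML Y) A) * a22 (mmul (ML Y) (mmul A (ML X))).
Proof. destruct A; unfold mdet, mmul, mtr; cbn [a11 a12 a21 a22 ML]; intros; split; nia. Qed.

Lemma xyx_identities (h : Z) (A : mat) : mdet A = 1 ->
  let N := Mat (1 + h) (h + 2) h (h + 1) in
  a22 (mmul (mtr A) (mmul N A)) =
    (h + 1) * (a22 (mmul (mtr A) (ML X)) * a22 (mmul (mtr A) (ML X))) /\
  a22 (mmul (mtr A) (mmul N (mmul A (ML X)))) + 1 =
    (h + 1) * a22 (mmul (mtr A) (ML X)) * a22 (mmul (mtr (mmul A (ML X))) (ML X)).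
Proof. destruct A; unfold mdet, mmul, mtr; cbn [a11 a12 a21 a22 ML]; intros; split; nia. Qed.

Lemma swap_involutive l : swap (swap l) = l.
Proof. destruct l; reflexivity. Qed.

Lemma join_nonneg L R (r : nat) : join L R (Z.of_nat r) = R r.
Proof.
  unfold join. destruct (Z.ltb_spec (Z.of_nat r) 0); [lia|]. now rewrite Nat2Z.id.
Qed.

Lemma join_neg L R (r : nat) : join L R (-1 - Z.of_nat r) = L r.
Proof.
  unfold join. destruct (Z.ltb_spec (-1 - Z.of_nat r) 0); [|lia]. f_equal; lia.
Qed.

Lemma rcat_beyond u s r : rcat u s (length u + r)%nat = s r.
Proof.
  unfold rcat. destruct (Nat.ltb_spec (length u + r) (length u)); [lia|]. f_equal; lia.
Qed.

Lemma lcat_beyond s u r : lcat s u (length u + r)%nat = s r.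
Proof.
  unfold lcat. destruct (Nat.ltb_spec (length u + r) (length u)); [lia|]. f_equal; lia.
Qed.

Lemma lcat_app (s : lword) u v m : lcat s (u ++ v) m = lcat (lcat s u) v m.
Proof.
  unfold lcat. rewrite length_app.
  destruct (Nat.ltb_spec m (length v)); destruct (Nat.ltb_spec m (length u + length v)); try lia.
  - rewrite app_nth2 by lia. f_equal. lia.
  - destruct (Nat.ltb_spec (m - length v) (length u)); try lia.
    rewrite app_nth1 by lia. f_equal. lia.
  - destruct (Nat.ltb_spec (m - length v) (length u)); try lia. f_equal. lia.
Qed.

Lemma join_rcat_leftward L u v s (r : nat) :
  join L (rcat (u ++ v) s) (Z.of_nat (length u) - 1 - Z.of_nat r) = lcat L u r.
Proof.
  unfold lcat. destruct (Nat.ltb_spec r (length u)).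
  - replace (Z.of_nat (length u) - 1 - Z.of_nat r) with (Z.of_nat (length u - 1 - r)) by lia.
    rewrite join_nonneg. unfold rcat. rewrite length_app.
    destruct (Nat.ltb_spec (length u - 1 - r) (length u + length v)); [|lia].
    apply app_nth1. lia.
  - replace (Z.of_nat (length u) - 1 - Z.of_nat r) with (-1 - Z.of_nat (r - length u)) by lia.
    apply join_neg.
Qed.

Definition occurs_at (f : frontier) (u : list letter) (p : Z) : Prop :=
  forall i : nat, (i < length u)%nat -> f (p + Z.of_nat i) = nth i u X.

Lemma occurs_cons {f l u p} : occurs_at f (l :: u) p -> f p = l /\ occurs_at f u (p + 1).
Proof.
  intros H. split.
  - rewrite <- (Z.add_0_r p). apply (H 0%nat); simpl; lia.
  - intros i Hi. replace (p + 1 + Z.of_nat i) with (p + Z.of_nat (S i)) by lia.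
    apply (H (S i)); simpl; lia.
Qed.

Lemma occurs_app {f u v p} :
  occurs_at f (u ++ v) p -> occurs_at f u p /\ occurs_at f v (p + Z.of_nat (length u)).
Proof.
  intros H. split; intros i Hi.
  - rewrite H, app_nth1 by (rewrite ?length_app; lia). reflexivity.
  - replace (p + Z.of_nat (length u) + Z.of_nat i) with (p + Z.of_nat (length u + i)) by lia.
    rewrite H, app_nth2 by (rewrite ?length_app; lia). f_equal; lia.
Qed.

Lemma occurs_rcat L u s : occurs_at (join L (rcat u s)) u 0.
Proof.
  intros i Hi. rewrite Z.add_0_l, join_nonneg. unfold rcat.
  destruct (Nat.ltb_spec i (length u)); [reflexivity | lia].
Qed.

Lemma occurs_lcat s u R : occurs_at (join (lcat s u) R) u (- Z.of_nat (length u)).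
Proof.
  intros i Hi.
  replace (- Z.of_nat (length u) + Z.of_nat i) with (-1 - Z.of_nat (length u - 1 - i)) by lia.
  rewrite join_neg. unfold lcat.
  destruct (Nat.ltb_spec (length u - 1 - i) (length u)); [|lia]. f_equal; lia.
Qed.

Lemma rcat_mirror L w v s : (forall m, tr_r s m = lcat L w m) ->
  forall r : nat,
    join L (rcat (w ++ v) s) (Z.of_nat (length w) - 1 - Z.of_nat r) =
    swap (join L (rcat (w ++ v) s) (Z.of_nat (length w) + Z.of_nat (length v) + Z.of_nat r)).
Proof.
  intros Hs r. rewrite join_rcat_leftward.
  replace (Z.of_nat (length w) + Z.of_nat (length v) + Z.of_nat r)
    with (Z.of_nat (length (w ++ v) + r)) by (rewrite length_app; lia).
  now rewrite join_nonneg, rcat_beyond, <- Hs.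
Qed.

Lemma lcat_mirror s' u R : (forall m, tr_l s' m = R m) ->
  forall r : nat,
    join (lcat s' u) R (- Z.of_nat (length u) - 1 - Z.of_nat r) =
    swap (join (lcat s' u) R (Z.of_nat r)).
Proof.
  intros Hs' r.
  replace (- Z.of_nat (length u) - 1 - Z.of_nat r) with (-1 - Z.of_nat (length u + r)) by lia.
  rewrite join_neg, lcat_beyond, join_nonneg, <- Hs'. unfold tr_l. now rewrite swap_involutive.
Qed.

Lemma frontier_shape h h' w s s' :
  (forall m, tr_r s m = lcat s' (X :: repeat Y h' ++ X :: w) m) ->
  (forall m, tr_l s' m = rcat (w ++ Y :: repeat X h ++ [Y]) s m) ->
  let f := join (lcat s' (X :: repeat Y h' ++ [X]))
                (rcat (w ++ Y :: repeat X h ++ [Y]) s) in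
  occurs_at f w 0 /\
  occurs_at f (Y :: repeat X h ++ [Y]) (Z.of_nat (length w)) /\
  occurs_at f (X :: repeat Y h' ++ [X]) (- Z.of_nat h' - 2) /\
  (forall r : nat, f (Z.of_nat (length w) - 1 - Z.of_nat r) =
                   swap (f (Z.of_nat (length w) + Z.of_nat h + 2 + Z.of_nat r))) /\
  (forall r : nat, f (- Z.of_nat h' - 2 - 1 - Z.of_nat r) =
                   swap (f (- Z.of_nat h' - 2 + Z.of_nat h' + 2 + Z.of_nat r))).
Proof.
  intros Hs Hs' f.
  assert (Hlen : length (Y :: repeat X h ++ [Y]) = (h + 2)%nat).
  { simpl. rewrite length_app, repeat_length. simpl. lia. }
  assert (Hlen' : length (X :: repeat Y h' ++ [X]) = (h' + 2)%nat).
  { simpl. rewrite length_app, repeat_length. simpl. lia. }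
  destruct (@occurs_app f w (Y :: repeat X h ++ [Y]) 0 (occurs_rcat _ _ _)) as [Hw Hyxy].
  rewrite Z.add_0_l in Hyxy.
  repeat split; [exact Hw | exact Hyxy | | |].
  - replace (- Z.of_nat h' - 2) with (- Z.of_nat (length (X :: repeat Y h' ++ [X])))
      by (rewrite Hlen'; lia).
    apply occurs_lcat.
  - assert (HsL : forall m, tr_r s m = lcat (lcat s' (X :: repeat Y h' ++ [X])) w m).
    { intros m. rewrite Hs, <- lcat_app. simpl. now rewrite <- app_assoc. }
    intros r. unfold f. rewrite (rcat_mirror _ _ _ _ HsL r), Hlen.
    f_equal; f_equal; lia.
  - intros r. unfold f.
    replace (- Z.of_nat h' - 2 - 1 - Z.of_nat r)
      with (- Z.of_nat (length (X :: repeat Y h' ++ [X])) - 1 - Z.of_nat r) by (rewrite Hlen'; lia).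
    replace (- Z.of_nat h' - 2 + Z.of_nat h' + 2 + Z.of_nat r) with (Z.of_nat r) by lia.
    now apply lcat_mirror.
Qed.

Section Frontier.

Variable f : frontier.

Lemma path_succ i : path f (i + 1) = padd (path f i) (step (f i)).
Proof.
  unfold path.
  destruct (Z_le_gt_dec 0 i) as [Hi|Hi].
  - rewrite (proj2 (Z.leb_le 0 (i + 1))), (proj2 (Z.leb_le 0 i)) by lia.
    replace (Z.to_nat (i + 1)) with (S (Z.to_nat i)) by lia. simpl.
    rewrite Z2Nat.id by lia. reflexivity.
  - rewrite (proj2 (Z.leb_gt 0 i)) by lia.
    replace (Z.to_nat (- i)) with (S (Z.to_nat (- (i + 1)))) by lia. simpl.
    replace (- Z.of_nat (Z.to_nat (- (i + 1))) - 1) with i by lia.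
    destruct (Z.leb_spec 0 (i + 1)).
    + replace (i + 1) with 0 by lia. simpl.
      destruct (step (f i)); unfold padd, psub; simpl; f_equal; ring.
    + destruct (neg_path f (Z.to_nat (- (i + 1)))), (step (f i));
        unfold padd, psub; simpl; f_equal; ring.
Qed.

Lemma path_word u p :
  occurs_at f u p -> path f (p + Z.of_nat (length u)) = padd (path f p) (word_disp u).
Proof.
  revert p; induction u as [|l u IH]; intros p Hu; simpl length.
  - rewrite Z.add_0_r. destruct (path f p). cbn [word_disp fold_right].
    unfold padd; cbn [fst snd]; f_equal; ring.
  - destruct (occurs_cons Hu) as [Hl Hu'].
    replace (p + Z.of_nat (S (length u))) with (p + 1 + Z.of_nat (length u)) by lia.
    rewrite (IH _ Hu'), path_succ, Hl. cbn [word_disp fold_right]. fold (word_disp u).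
    destruct (path f p), (step l), (word_disp u); unfold padd; cbn [fst snd]; f_equal; ring.
Qed.

(** Segment matrices: [seg p n] is the product of the matrices of the letters
    at positions p, ..., p + n - 1. *)

Fixpoint seg (p : Z) (n : nat) : mat :=
  match n with O => mid | S n => mmul (ML (f p)) (seg (p + 1) n) end.

Lemma seg_cons p n : seg p (S n) = mmul (ML (f p)) (seg (p + 1) n).
Proof. reflexivity. Qed.

Lemma seg_app n1 n2 p :
  seg p (n1 + n2) = mmul (seg p n1) (seg (p + Z.of_nat n1) n2).
Proof.
  revert p; induction n1 as [|n1 IH]; intros p.
  - simpl. now rewrite mmul_id_l, Z.add_0_r.
  - simpl (S n1 + n2)%nat. rewrite !seg_cons, IH, mmul_assoc.
    now replace (p + 1 + Z.of_nat n1) with (p + Z.of_nat (S n1)) by lia.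
Qed.

Lemma seg_snoc n p : seg p (S n) = mmul (seg p n) (ML (f (p + Z.of_nat n))).
Proof.
  replace (S n) with (n + 1)%nat by lia. rewrite seg_app. simpl. now rewrite mmul_id_r.
Qed.

Lemma seg_det n p : mdet (seg p n) = 1.
Proof.
  revert p; induction n as [|n IH]; intros p; [reflexivity|].
  rewrite seg_cons, mdet_mul, IH. now destruct (f p).
Qed.

Lemma seg_word u p : occurs_at f u p -> seg p (length u) = word_mat u.
Proof.
  revert p; induction u as [|l u IH]; intros p Hu; [reflexivity|].
  destruct (occurs_cons Hu) as [Hl Hu']. simpl length.
  now rewrite seg_cons, Hl, (IH _ Hu').
Qed.

Lemma yxy_coordinates c h : occurs_at f (Y :: repeat X h ++ [Y]) c ->
  path f (c + Z.of_nat h + 1) = padd (path f c) (Z.of_nat h, 1) /\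
  path f (c + Z.of_nat h + 2) = padd (path f c) (Z.of_nat h, 2) /\
  seg c (h + 2) = Mat (1 + Z.of_nat h) (Z.of_nat h) (Z.of_nat h + 2) (Z.of_nat h + 1) /\
  f (c + Z.of_nat h + 1) = Y.
Proof.
  intros Hocc. destruct (yxy_factor h) as (HN & Hpre & Hall).
  assert (Hlen : length (Y :: repeat X h ++ [Y]) = (h + 2)%nat).
  { simpl. rewrite length_app, repeat_length. simpl. lia. }
  destruct (@occurs_app f (Y :: repeat X h) [Y] c Hocc) as [Hprefix Hlast].
  simpl length in Hlast. rewrite repeat_length in Hlast.
  repeat split.
  - rewrite <- Hpre, <- (path_word _ _ Hprefix). f_equal. simpl. rewrite repeat_length. lia.
  - rewrite <- Hall, <- (path_word _ _ Hocc), Hlen. f_equal. lia.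
  - rewrite <- HN, <- Hlen. apply (seg_word _ _ Hocc).
  - replace (c + Z.of_nat h + 1) with (c + Z.of_nat (S h) + Z.of_nat 0) by lia.
    apply (Hlast 0%nat). simpl. lia.
Qed.

Lemma xyx_coordinates c h : occurs_at f (X :: repeat Y h ++ [X]) c ->
  path f (c + 1) = padd (path f c) (1, 0) /\
  path f (c + Z.of_nat h + 2) = padd (path f c) (2, Z.of_nat h) /\
  seg c (h + 2) = Mat (1 + Z.of_nat h) (Z.of_nat h + 2) (Z.of_nat h) (Z.of_nat h + 1) /\
  f c = X.
Proof.
  intros Hocc. destruct (xyx_factor h) as (HN & Hall).
  assert (Hlen : length (X :: repeat Y h ++ [X]) = (h + 2)%nat).
  { simpl. rewrite length_app, repeat_length. simpl. lia. }
  destruct (occurs_cons Hocc) as [Hfirst _].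
  repeat split; [| | | exact Hfirst].
  - now rewrite path_succ, Hfirst.
  - rewrite <- Hall, <- (path_word _ _ Hocc), Hlen. f_equal. lia.
  - rewrite <- HN, <- Hlen. apply (seg_word _ _ Hocc).
Qed.

(** Mirrors: f is symmetric, up to exchanging x and y, about the factor
    between positions c and d. *)

Section Mirror.

Variables c d : Z.
Hypothesis mirror : forall r : nat, f (c - 1 - Z.of_nat r) = swap (f (d + Z.of_nat r)).

Lemma seg_refl m : seg (c - Z.of_nat m) m = mtr (seg d m).
Proof.
  induction m as [|m IH]; [reflexivity|].
  rewrite (seg_snoc m d), mtr_mul, <- ML_swap, <- mirror, seg_cons.
  replace (c - Z.of_nat (S m) + 1) with (c - Z.of_nat m) by lia.
  replace (c - 1 - Z.of_nat m) with (c - Z.of_nat (S m)) by lia.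
  now rewrite IH.
Qed.

Lemma path_refl m :
  snd (path f (c - Z.of_nat m)) = snd (path f c) - (fst (path f (d + Z.of_nat m)) - fst (path f d)).
Proof.
  induction m as [|m IH].
  - rewrite Z.sub_0_r, Z.add_0_r. ring.
  - assert (E1 := path_succ (c - 1 - Z.of_nat m)).
    replace (c - 1 - Z.of_nat m + 1) with (c - Z.of_nat m) in E1 by lia.
    assert (E2 := path_succ (d + Z.of_nat m)).
    replace (d + Z.of_nat m + 1) with (d + Z.of_nat (S m)) in E2 by lia.
    rewrite mirror in E1. replace (c - Z.of_nat (S m)) with (c - 1 - Z.of_nat m) by lia.
    rewrite E2. rewrite E1 in IH. unfold padd in *. cbn [fst snd] in *.
    destruct (f (d + Z.of_nat m)); cbn [swap step fst snd] in *; lia.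
Qed.

End Mirror.

Lemma exists_X_after : ~ ult_const_right f -> forall q, exists i, q <= i /\ f i = X.
Proof.
  intros Hnc q. apply NNPP. intros Hno. apply Hnc. exists q. intros i Hi.
  assert (HY : forall j, q <= j -> f j = Y).
  { intros j Hj. destruct (f j) eqn:E; [|reflexivity]. exfalso. apply Hno. eauto. }
  now rewrite (HY i Hi), (HY q (Z.le_refl q)).
Qed.

Lemma reach_X_column N q : f (q + Z.of_nat N) = X ->
  exists m : nat, f (q + Z.of_nat m) = X /\ fst (path f (q + Z.of_nat m)) = fst (path f q).
Proof.
  revert q; induction N as [|N IH]; intros q HN.
  - exists 0%nat. now rewrite Z.add_0_r in *.
  - destruct (f q) eqn:Fq.
    + exists 0%nat. now rewrite Z.add_0_r.
    + destruct (IH (q + 1)) as [m [Fm Cm]].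
      { now replace (q + 1 + Z.of_nat N) with (q + Z.of_nat (S N)) by lia. }
      exists (S m). replace (q + Z.of_nat (S m)) with (q + 1 + Z.of_nat m) by lia.
      split; [exact Fm|]. rewrite Cm, path_succ, Fq. cbn [fst step padd]. ring.
Qed.

Lemma column_X : ~ ult_const_right f -> forall (n : nat) (q : Z),
  exists m : nat, f (q + Z.of_nat m) = X /\
                  fst (path f (q + Z.of_nat m)) = fst (path f q) + Z.of_nat n.
Proof.
  intros Hnc.
  assert (Hreach : forall q, exists m : nat,
             f (q + Z.of_nat m) = X /\ fst (path f (q + Z.of_nat m)) = fst (path f q)).
  { intros q. destruct (exists_X_after Hnc q) as [i [Hi Fi]].
    apply (reach_X_column (Z.to_nat (i - q))). rewrite Z2Nat.id by lia.
    now replace (q + (i - q)) with i by ring. }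
  induction n as [|n IH]; intros q.
  - destruct (Hreach q) as [m [Fm Cm]]. exists m. split; [exact Fm | lia].
  - destruct (IH q) as [m0 [F0 C0]].
    destruct (Hreach (q + Z.of_nat m0 + 1)) as [m1 [F1 C1]].
    exists (m0 + 1 + m1)%nat.
    replace (q + Z.of_nat (m0 + 1 + m1)) with (q + Z.of_nat m0 + 1 + Z.of_nat m1) by lia.
    split; [exact F1|]. rewrite C1, path_succ, F0. cbn [fst step padd]. lia.
Qed.

Lemma column_X_step : ~ ult_const_right f -> forall (n : nat) (q : Z),
  exists m : nat, seg q (S m) = mmul (seg q m) (ML X) /\
                  fst (path f (q + Z.of_nat m)) = fst (path f q) + Z.of_nat n /\
                  fst (path f (q + Z.of_nat (S m))) = fst (path f q) + Z.of_nat n + 1.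
Proof.
  intros Hnc n q. destruct (column_X Hnc n q) as [m [Fm Cm]].
  exists m. split; [|split; [exact Cm|]].
  - now rewrite seg_snoc, Fm.
  - replace (q + Z.of_nat (S m)) with (q + Z.of_nat m + 1) by lia.
    rewrite path_succ, Fm. cbn [fst step padd]. lia.
Qed.

End Frontier.

Section Tiling.

Variable f : frontier.
Variable t : Z * Z -> nat.
Hypothesis tiling : SL2_tiling t.
Hypothesis ext : extends t f.

Ltac solve_point := unfold padd; cbn [fst snd step]; f_equal; lia.

Lemma tiling_pos P : (0 < t P)%nat.
Proof.
  destruct P as [a b]. specialize (tiling a (b - 1)).
  replace (b - 1 + 1) with b in tiling by ring.
  destruct (t (a, b)); simpl in tiling; lia.
Qed.

(* The lattice point with the abscissa of path point p + n and the ordinate of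
   path point p: the corner below the path segment from p to p + n. *)
Definition corner (p : Z) (n : nat) : Z * Z :=
  (fst (path f (p + Z.of_nat n)), snd (path f p)).

Lemma corner_shift p m :
  corner (p + 1) m = padd (corner p (S m)) (0, snd (step (f p))).
Proof.
  unfold corner. replace (p + 1 + Z.of_nat m) with (p + Z.of_nat (S m)) by lia.
  rewrite path_succ. destruct (path f p), (step (f p)); unfold padd; cbn [fst snd]; f_equal; ring.
Qed.

Lemma corner_extend p m :
  corner p (S m) = padd (corner p m) (fst (step (f (p + Z.of_nat m))), 0).
Proof.
  unfold corner. replace (p + Z.of_nat (S m)) with (p + Z.of_nat m + 1) by lia.
  rewrite path_succ. destruct (path f (p + Z.of_nat m)), (step (f (p + Z.of_nat m))).
  unfold padd; cbn [fst snd]; f_equal; ring.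
Qed.

Lemma sl2_at a b P1 P2 P3 P4 :
  P1 = (a, b + 1) -> P2 = (a + 1, b) -> P3 = (a, b) -> P4 = (a + 1, b + 1) ->
  (t P1 * t P2 = 1 + t P3 * t P4)%nat.
Proof. intros -> -> -> ->. apply tiling. Qed.

(* The four corners below a segment y ... x and its two maximal proper
   subsegments form a unit square. *)
Lemma corner_square p n : f p = Y -> f (p + Z.of_nat (S n)) = X ->
  (t (corner (p + 1) n) * t (corner p (S (S n))) =
   1 + t (corner p (S n)) * t (corner (p + 1) (S n)))%nat.
Proof.
  intros Fp Fq. destruct (corner p (S n)) as [a b] eqn:HQ.
  apply (sl2_at a b); [| | reflexivity |].
  - rewrite corner_shift, HQ, Fp. solve_point.
  - rewrite corner_extend, HQ, Fq. solve_point.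
  - rewrite corner_shift, corner_extend, HQ, Fq, Fp. solve_point.
Qed.

(* Induction on the length: an initial
   x or a final y does not move the corner, and a segment y ... x closes a
   unit square on which the SL2 relation matches a22_recurrence. *)
Lemma corner_entry n p : Z.of_nat (t (corner p n)) = a22 (seg f p n).
Proof.
  revert p; induction n as [n IH] using lt_wf_ind; intros p.
  destruct n as [|n].
  { unfold corner. now rewrite Z.add_0_r, <- surjective_pairing, ext. }
  destruct (f p) eqn:Fp.
  - assert (Hc : corner p (S n) = corner (p + 1) n).
    { rewrite corner_shift, Fp. destruct (corner p (S n)). solve_point. }
    rewrite Hc, IH, seg_cons, Fp by lia.
    destruct (seg f (p + 1) n) as [m11 m12 m21 m22]; unfold mmul; cbn [a11 a12 a21 a22 ML]; ring.
  - destruct (f (p + Z.of_nat n)) eqn:Fq.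
    + destruct n as [|n]; [rewrite Z.add_0_r, Fp in Fq; discriminate|].
      set (M := seg f (p + 1) n).
      assert (E1 : seg f p (S n) = mmul (ML Y) M) by now rewrite seg_cons, Fp.
      assert (E3 : seg f (p + 1) (S n) = mmul M (ML X)).
      { rewrite seg_snoc. replace (p + 1 + Z.of_nat n) with (p + Z.of_nat (S n)) by lia.
        now rewrite Fq. }
      assert (E2 : seg f p (S (S n)) = mmul (ML Y) (mmul M (ML X))) by now rewrite seg_cons, Fp, E3.
      assert (Hsq := corner_square p n Fp Fq).
      apply (f_equal Z.of_nat) in Hsq. rewrite !Nat2Z.inj_mul, Nat2Z.inj_add, Nat2Z.inj_mul in Hsq.
      rewrite (IH n ltac:(lia) (p + 1)), (IH (S n) ltac:(lia) p), (IH (S n) ltac:(lia) (p + 1)),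
              E1, E3 in Hsq.
      assert (Hpos : 0 < a22 M).
      { unfold M. rewrite <- (IH n ltac:(lia) (p + 1)). pose proof (tiling_pos (corner (p + 1) n)). lia. }
      rewrite E2. apply (Z.mul_reg_l _ _ (a22 M)); [lia|].
      fold M in Hsq. rewrite Hsq, a22_recurrence by apply seg_det. reflexivity.
    + assert (Hc : corner p (S n) = corner p n).
      { rewrite corner_extend, Fq. destruct (corner p n). solve_point. }
      rewrite Hc, IH, seg_snoc, Fq by lia.
      destruct (seg f p n) as [m11 m12 m21 m22]; unfold mmul; cbn [a11 a12 a21 a22 ML]; ring.
Qed.

Lemma corner_value p n P : P = corner p n -> Z.of_nat (t P) = a22 (seg f p n).
Proof. intros ->. apply corner_entry. Qed.

Lemma mirror_value c d
  (mirror : forall r : nat, f (c - 1 - Z.of_nat r) = swap (f (d + Z.of_nat r)))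
  (m r : nat) P :
  P = (fst (path f (c + Z.of_nat r)),
       snd (path f c) - (fst (path f (d + Z.of_nat m)) - fst (path f d))) ->
  Z.of_nat (t P) = a22 (mmul (mtr (seg f d m)) (seg f c r)).
Proof.
  intros ->. rewrite <- (seg_refl f c d mirror m).
  replace (seg f c r) with (seg f (c - Z.of_nat m + Z.of_nat m) r) by (f_equal; lia).
  rewrite <- seg_app, <- corner_entry. unfold corner.
  rewrite (path_refl f c d mirror m).
  now replace (c - Z.of_nat m + Z.of_nat (m + r)) with (c + Z.of_nat r) by lia.
Qed.

(* Along an antidiagonal through a path point, consecutive values satisfy the
   SL2 relation of the unit square between them; its other two corners lie on
   the antidiagonals through the neighbouring path points, at offsets fixed by
   the two letters around the path point. *)
Lemma antidiagonal_relation (j n : nat) : (1 <= j)%nat ->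
  let b (i n : nat) := t (padd (path f (Z.of_nat i)) (Z.of_nat n, - Z.of_nat n)) in
  (b j n * b j (n + 1) = 1 +
     match f (Z.of_nat (j - 1)), f (Z.of_nat j) with
     | X, X => b (j - 1) (n + 1) * b (j + 1) n
     | X, Y => b (j - 1) (n + 1) * b (j + 1) (n + 1)
     | Y, X => b (j - 1) n * b (j + 1) n
     | Y, Y => b (j - 1) n * b (j + 1) (n + 1)
     end)%nat.
Proof.
  intros Hj b. unfold b.
  assert (Hprev : path f (Z.of_nat j) =
                  padd (path f (Z.of_nat (j - 1))) (step (f (Z.of_nat (j - 1))))).
  { rewrite <- path_succ. f_equal. lia. }
  assert (Hnext : path f (Z.of_nat (j + 1)) =
                  padd (path f (Z.of_nat j)) (step (f (Z.of_nat j)))).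
  { rewrite <- path_succ. f_equal. lia. }
  rewrite Hnext, Hprev. destruct (path f (Z.of_nat (j - 1))) as [x0 y0].
  destruct (f (Z.of_nat (j - 1))) eqn:E1, (f (Z.of_nat j));
    apply (sl2_at (x0 + fst (step (f (Z.of_nat (j - 1)))) + Z.of_nat n)
                  (y0 + snd (step (f (Z.of_nat (j - 1)))) - Z.of_nat n - 1));
    rewrite E1; solve_point.
Qed.

Hypothesis right_nonconst : ~ ult_const_right f.

(* For the x-step leaving the n-th column beyond the factor, with A the
   matrix of the letters before it, i_n, i_(n+1), j_n, k_n are the entries a22
   of M(y) A, M(y) A M(x), A^T N A and (A M(x))^T N A. *)
Lemma yxy_mirror (c : Z) (h : nat) :
  occurs_at f (Y :: repeat X h ++ [Y]) c ->
  (forall r : nat, f (c - 1 - Z.of_nat r) = swap (f (c + Z.of_nat h + 2 + Z.of_nat r))) ->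
  let I := path f (c + Z.of_nat h + 1) in
  let i_ (n : nat) := t (padd I (Z.of_nat n, 0)) in
  let j_ (n : nat) := t (padd (padd I (0, -1)) (Z.of_nat n, - Z.of_nat n)) in
  let k_ (n : nat) := t (padd (padd I (0, -2)) (Z.of_nat n, - Z.of_nat n)) in
  forall n : nat,
    (j_ n = (h + 1) * (i_ n * i_ n))%nat /\ (k_ n + 1 = (h + 1) * i_ n * i_ (n + 1))%nat.
Proof.
  intros Hocc mirror; cbv zeta; intros n.
  destruct (yxy_coordinates f c h Hocc) as (HI & Hd & HN & Fl).
  set (d := c + Z.of_nat h + 2) in *.
  assert (Hd_def : d = c + Z.of_nat h + 2) by reflexivity. clearbody d.
  destruct (path f c) as [xc yc] eqn:Hc.
  unfold padd in HI, Hd; cbn [fst snd] in HI, Hd. rewrite HI.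
  assert (Hrow : forall r P, P = (fst (path f (d + Z.of_nat r)), yc + 1) ->
            Z.of_nat (t P) = a22 (mmul (ML Y) (seg f d r))).
  { intros r P ->. rewrite (corner_value (c + Z.of_nat h + 1) (S r)).
    - rewrite seg_cons, Fl. now replace (c + Z.of_nat h + 1 + 1) with d by lia.
    - unfold corner. rewrite HI. now replace (c + Z.of_nat h + 1 + Z.of_nat (S r)) with (d + Z.of_nat r) by lia. }
  assert (Hbelow : forall r1 r2 P,
            P = (fst (path f (d + Z.of_nat r2)), yc - (fst (path f (d + Z.of_nat r1)) - (xc + Z.of_nat h))) ->
            Z.of_nat (t P) = a22 (mmul (mtr (seg f d r1)) (mmul (seg f c (h + 2)) (seg f d r2)))).
  { intros r1 r2 P ->. rewrite (mirror_value c d mirror r1 (h + 2 + r2)), seg_app.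
    - now replace (c + Z.of_nat (h + 2)) with d by lia.
    - rewrite Hc, Hd. now replace (c + Z.of_nat (h + 2 + r2)) with (d + Z.of_nat r2) by lia. }
  rewrite HN in Hbelow.
  destruct (column_X_step f right_nonconst n d) as (m & HA & Cm & Cm1).
  rewrite Hd in Cm, Cm1; cbn [fst] in Cm, Cm1.
  destruct (yxy_identities (Z.of_nat h) (seg f d m) (seg_det f m d)) as [Q1 Q2].
  rewrite <- HA in Q2.
  split; apply Nat2Z.inj.
  - rewrite !Nat2Z.inj_mul, (Hbelow m m), (Hrow m), Nat2Z.inj_add by solve_point. exact Q1.
  - rewrite Nat2Z.inj_add, !Nat2Z.inj_mul, (Hbelow (S m) m), (Hrow m), (Hrow (S m)), Nat2Z.inj_add
      by solve_point.
    exact Q2.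
Qed.

(* The formulas for j'_n and k'_n around a mirror factor x y^h x starting at
   c: with A as in yxy_mirror, i'_n, i'_(n+1), j'_n, k'_n are the entries a22
   of A^T M(x), (A M(x))^T M(x), A^T N A and A^T N (A M(x)). *)
Lemma xyx_mirror (c : Z) (h : nat) :
  occurs_at f (X :: repeat Y h ++ [X]) c ->
  (forall r : nat, f (c - 1 - Z.of_nat r) = swap (f (c + Z.of_nat h + 2 + Z.of_nat r))) ->
  let I := path f (c + 1) in
  let i_ (n : nat) := t (padd I (0, - Z.of_nat n)) in
  let j_ (n : nat) := t (padd (padd I (1, 0)) (Z.of_nat n, - Z.of_nat n)) in
  let k_ (n : nat) := t (padd (padd I (2, 0)) (Z.of_nat n, - Z.of_nat n)) in
  forall n : nat,
    (j_ n = (h + 1) * (i_ n * i_ n))%nat /\ (k_ n + 1 = (h + 1) * i_ n * i_ (n + 1))%nat.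
Proof.
  intros Hocc mirror; cbv zeta; intros n.
  destruct (xyx_coordinates f c h Hocc) as (HI & Hd & HN & Fc).
  set (d := c + Z.of_nat h + 2) in *.
  assert (Hd_def : d = c + Z.of_nat h + 2) by reflexivity. clearbody d.
  destruct (path f c) as [xc yc] eqn:Hc.
  unfold padd in HI, Hd; cbn [fst snd] in HI, Hd. rewrite Z.add_0_r in HI. rewrite HI.
  assert (Hcol : forall r P, P = (xc + 1, yc - (fst (path f (d + Z.of_nat r)) - (xc + 2))) ->
            Z.of_nat (t P) = a22 (mmul (mtr (seg f d r)) (ML X))).
  { intros r P ->. rewrite (mirror_value c d mirror r 1).
    - now rewrite seg_cons, Fc, mmul_id_r.
    - rewrite Hc, Hd. change (Z.of_nat 1) with 1. now rewrite HI. }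
  assert (Hright : forall r1 r2 P,
            P = (fst (path f (d + Z.of_nat r2)), yc - (fst (path f (d + Z.of_nat r1)) - (xc + 2))) ->
            Z.of_nat (t P) = a22 (mmul (mtr (seg f d r1)) (mmul (seg f c (h + 2)) (seg f d r2)))).
  { intros r1 r2 P ->. rewrite (mirror_value c d mirror r1 (h + 2 + r2)), seg_app.
    - now replace (c + Z.of_nat (h + 2)) with d by lia.
    - rewrite Hc, Hd. now replace (c + Z.of_nat (h + 2 + r2)) with (d + Z.of_nat r2) by lia. }
  rewrite HN in Hright.
  destruct (column_X_step f right_nonconst n d) as (m & HA & Cm & Cm1).
  rewrite Hd in Cm, Cm1; cbn [fst] in Cm, Cm1.
  destruct (xyx_identities (Z.of_nat h) (seg f d m) (seg_det f m d)) as [Q1 Q2].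
  rewrite <- HA in Q2.
  split; apply Nat2Z.inj.
  - rewrite !Nat2Z.inj_mul, (Hright m m), (Hcol m), Nat2Z.inj_add by solve_point. exact Q1.
  - rewrite Nat2Z.inj_add, !Nat2Z.inj_mul, (Hright m (S m)), (Hcol m), (Hcol (S m)), Nat2Z.inj_add
      by solve_point.
    exact Q2.
Qed.

End Tiling.

Theorem lemma3 (h h' : nat) (w : list letter) (s : rword) (s' : lword)
  (t : Z * Z -> nat) :
  (forall m, tr_r s m = lcat s' (X :: repeat Y h' ++ X :: w) m) ->
  (forall m, tr_l s' m = rcat (w ++ Y :: repeat X h ++ [Y]) s m) ->
  let f := join (lcat s' (X :: repeat Y h' ++ [X]))
                (rcat (w ++ Y :: repeat X h ++ [Y]) s) in
  admissible f -> SL2_tiling t -> extends t f ->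
  let k := length w in
  let P (j : nat) := path f (Z.of_nat j) in
  let b (j n : nat) := t (padd (P j) (Z.of_nat n, - Z.of_nat n)) in
  let I := path f (Z.of_nat k + Z.of_nat h + 1) in
  let I' := path f (- Z.of_nat h' - 1) in
  let J := padd I (0, -1) in
  let K := padd I (0, -2) in
  let J' := padd I' (1, 0) in
  let K' := padd I' (2, 0) in
  let i_ (n : nat) := t (padd I (Z.of_nat n, 0)) in
  let i'_ (n : nat) := t (padd I' (0, - Z.of_nat n)) in
  let j_ (n : nat) := t (padd J (Z.of_nat n, - Z.of_nat n)) in
  let k_ (n : nat) := t (padd K (Z.of_nat n, - Z.of_nat n)) in
  let j'_ (n : nat) := t (padd J' (Z.of_nat n, - Z.of_nat n)) in
  let k'_ (n : nat) := t (padd K' (Z.of_nat n, - Z.of_nat n)) in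
  forall n : nat,
    (j_ n = (h + 1) * (i_ n * i_ n))%nat /\
    (k_ n + 1 = (h + 1) * i_ n * i_ (n + 1))%nat /\
    (j'_ n = (h' + 1) * (i'_ n * i'_ n))%nat /\
    (k'_ n + 1 = (h' + 1) * i'_ n * i'_ (n + 1))%nat /\
    (forall j : nat, (1 <= j <= k - 1)%nat ->
       (b j n * b j (n + 1) = 1 +
          match nth (j - 1) w X, nth j w X with
          | X, X => b (j - 1) (n + 1) * b (j + 1) n
          | X, Y => b (j - 1) (n + 1) * b (j + 1) (n + 1)
          | Y, X => b (j - 1) n * b (j + 1) n
          | Y, Y => b (j - 1) n * b (j + 1) (n + 1)
          end)%nat).
Proof.
  intros Hs Hs' f Hadm HS HE k P b I I' J K J' K' i_ i'_ j_ k_ j'_ k'_ n.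
  destruct (frontier_shape h h' w s s' Hs Hs') as (Hw & Hyxy & Hxyx & Hmirror & Hmirror').
  destruct (yxy_mirror f t HS HE (proj1 Hadm) (Z.of_nat k) h Hyxy Hmirror n) as [Hj Hk].
  destruct (xyx_mirror f t HS HE (proj1 Hadm) (- Z.of_nat h' - 2) h' Hxyx Hmirror' n)
    as [Hj' Hk'].
  replace (- Z.of_nat h' - 2 + 1) with (- Z.of_nat h' - 1) in Hj', Hk' by lia.
  repeat split; [exact Hj | exact Hk | exact Hj' | exact Hk' |].
  intros j Hjk.
  rewrite <- (Hw (j - 1)%nat), <- (Hw j), !Z.add_0_l by lia.
  exact (antidiagonal_relation f t HS j n ltac:(lia)).
Qed.
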